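(* For every integer $n\ge 1$, $$\rho(P_n)\le 1+\frac{n(n-1)}{2}-3\left\lfloor \frac{n}{7}\right\rfloor.$$
   Context: $P_n$ denotes the path on $n$ vertices (of length $n-1$). All graphs are finite and simple. A coloring means a proper vertex coloring; an induced subgraph is rainbow if all its vertices have pairwise different colors. $\rho(H)$ is the least number $m$ such that some graph $G$ on $m$ vertices has the property that every proper vertex coloring of $G$ contains a rainbow induced subgraph isomorphic to $H$. *)

From mathcomp Require Import all_boot.
Set Implicit Arguments. Unset Strict Implicit. Unset Printing Implicit Defensive.

Definition simple_graph (V : finType) (g : rel V) : Prop :=
  (forall x y, g x y = g y x) /\ (forall x, g x x = false).

Definition path_graph (n : nat) : rel 'I_n :=
  fun i j => (i.+1 == j :> nat) || (j.+1 == i :> nat).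

(* Proper vertex colouring (colours are natural numbers; any finite colour
   set can be encoded in nat). *)
Definition proper_coloring (V : finType) (g : rel V) (c : V -> nat) : Prop :=
  forall x y, g x y -> c x <> c y.

Definition rainbow_induced_copy (W V : finType) (h : rel W) (g : rel V)
    (c : V -> nat) (f : W -> V) : Prop :=
  [/\ injective f,
      (forall u v, g (f u) (f v) = h u v) &
      injective (fun u => c (f u))].

(* Some simple graph on m vertices forces a rainbow induced copy of h in
   every proper colouring.  rho(h) is the least m with this property. *)
Definition rainbow_forcing (W : finType) (h : rel W) (m : nat) : Prop :=
  exists g : rel 'I_m, simple_graph g /\
    forall c : 'I_m -> nat, proper_coloring g c ->
      exists f : W -> 'I_m, rainbow_induced_copy h g c f.

Definition rho_le (W : finType) (h : rel W) (B : nat) : Prop :=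
  exists2 m, m <= B & rainbow_forcing h m.

From mathcomp Require Import all_boot zify.
Set Implicit Arguments. Unset Strict Implicit. Unset Printing Implicit Defensive.

(* Blow up vertex j of P_n into a clique of size s_j and join consecutive
   cliques completely.  In a proper colouring block j carries s_j colours and two
   consecutive blocks carry s_j + s_(j+1), so for any set J of indices the blocks
   in J carry at least as many colours as the heaviest clique of P_n[J].  If that
   weight is always at least |J|, Hall's theorem picks pairwise distinct colours
   c_j, one from each block, and a vertex of colour c_j in each block j spans a
   rainbow induced P_n.  The weights 1,1,2,3,4,4,5,...,n-2 qualify and give
   n(n-1)/2 + 6 - n vertices, which is within the bound except for n = 7, where
   the weights 1,2,3,4,2,2,4 give 18 vertices. *)


Section HallMarriage.
Variables (I T : finType) (t0 : T).
Implicit Types (D J K : {set I}) (A : I -> {set T}) (U : {set T}).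

Definition hall_condition D A :=
  forall J, J \subset D -> #|J| <= #|\bigcup_(i in J) A i|.

Definition distinct_reps D A (f : I -> T) :=
  {in D &, injective f} /\ {in D, forall i, f i \in A i}.

Lemma distinct_reps_glue D J A U f g :
    distinct_reps J A f -> {in J, forall i, f i \in U} ->
    distinct_reps (D :\: J) (fun i => A i :\: U) g ->
  distinct_reps D A (fun i => if i \in J then f i else g i).
Proof.
move=> [injf fA] fU [injg gA]; have gJ i : i \in D -> i \notin J -> i \in D :\: J.
  by move=> iD iJ; rewrite inE iJ.
split=> [i j iD jD|i iD]; last first.
  by case: ifPn => [/fA //|/(gJ i iD)/gA]; rewrite inE => /andP[].
case: ifPn => iJ; case: ifPn => jJ; first exact: injf.
- move=> fg; have := gA j (gJ j jD jJ).
  by rewrite -fg inE fU.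
- move=> gf; have := gA i (gJ i iD iJ).
  by rewrite gf inE fU.
- exact: injg (gJ i iD iJ) (gJ j jD jJ).
Qed.

Lemma card_bigcup_setU_le K J A U : \bigcup_(i in J) A i \subset U ->
  #|\bigcup_(i in K :|: J) A i| <= #|\bigcup_(i in K) (A i :\: U)| + #|U|.
Proof.
move=> AJU; apply: leq_trans (leq_card_setU _ U).1; apply: subset_leq_card.
apply/subsetP=> x /bigcupP[i]; rewrite inE => /orP[iK | iJ] xA.
  case xU: (x \in U); first by rewrite inE xU orbT.
  by rewrite inE; apply/orP; left; apply/bigcupP; exists i; rewrite ?inE ?xU.
by rewrite inE (subsetP AJU) ?orbT //; apply/bigcupP; exists i.
Qed.

Lemma hall_condition_setD_tight D A J :
    hall_condition D A -> J \subset D -> #|\bigcup_(i in J) A i| <= #|J| ->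
  hall_condition (D :\: J) (fun i => A i :\: \bigcup_(i in J) A i).
Proof.
move=> hallDA JD tightJ K /subsetP KDJ.
have KJ : [disjoint K & J].
  by apply/pred0P=> i /=; apply/negbTE/andP=> [[/KDJ]]; rewrite inE => /andP[/negP].
have := hallDA (K :|: J); rewrite subUset JD andbT.
have -> : K \subset D by apply/subsetP=> i /KDJ; rewrite inE => /andP[].
move=> /(_ isT); rewrite cardsU (disjoint_setI0 KJ) cards0 subn0.
have := card_bigcup_setU_le K (subxx (\bigcup_(i in J) A i)); lia.
Qed.

Lemma hall_condition_setD1 D A i0 x :
    (forall J, J \subset D -> J != set0 -> J != D ->
       #|J| < #|\bigcup_(i in J) A i|) ->
    i0 \in D ->
  hall_condition (D :\ i0) (fun i => A i :\ x).
Proof.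
move=> slackD i0D K KDi0; have [-> | nzK] := eqVneq K set0; first by rewrite cards0.
have KD : K \subset D by apply: subset_trans KDi0 (subsetDl _ _).
have KneD : K != D.
  by apply: contraTneq KDi0 => ->; apply/subsetPn; exists i0; rewrite ?inE ?eqxx.
have := slackD K KD nzK KneD.
have := @card_bigcup_setU_le K set0 A [set x].
rewrite big_set0 sub0set setU0 cards1 => /(_ isT); lia.
Qed.

Theorem hall_marriage D A : hall_condition D A -> exists f, distinct_reps D A f.
Proof.
have [k] := ubnP #|D|; elim: k => // k IH in D A *; rewrite ltnS => leDk hallDA.
case: (boolP [exists J : {set I}, [&& J \subset D, J != set0, J != D &
    #|\bigcup_(i in J) A i| <= #|J|]]) => [/existsP[J /and4P[JD nzJ neJD tightJ]] | noTight].
  have ltJD : #|J| < #|D| by apply: proper_card; rewrite properEneq neJD.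
  have [f repsJ] := IH J A (leq_trans ltJD leDk)
    (fun K KJ => hallDA K (subset_trans KJ JD)).
  have ltDJ : #|D :\: J| < #|D|.
    by rewrite cardsD (setIidPr JD); move: nzJ; rewrite -card_gt0; lia.
  have [g repsDJ] := IH _ _ (leq_trans ltDJ leDk)
    (hall_condition_setD_tight hallDA JD tightJ).
  exists (fun i => if i \in J then f i else g i).
  apply: distinct_reps_glue (repsJ) _ repsDJ => i iJ.
  by apply/bigcupP; exists i => //; apply: repsJ.2.
have slackD J : J \subset D -> J != set0 -> J != D ->
    #|J| < #|\bigcup_(i in J) A i|.
  move=> JD nzJ neJD; rewrite ltnNge; apply: contraNN noTight => tightJ.
  by apply/existsP; exists J; rewrite JD nzJ neJD.
have [-> | [i0 i0D]] := set_0Vmem D.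
  by exists (fun=> t0); split=> i; rewrite inE.
have [x xA] : exists x, x \in A i0.
  apply/set0Pn; rewrite -card_gt0.
  by have := hallDA [set i0]; rewrite sub1set i0D big_set1 cards1; apply.
have ltDi0 : #|D :\ i0| < #|D| by rewrite (cardsD1 i0 D) i0D.
have [g repsDi0] := IH _ _ (leq_trans ltDi0 leDk) (hall_condition_setD1 x slackD i0D).
exists (fun i => if i \in [set i0] then x else g i).
apply: distinct_reps_glue repsDi0 => [|i]; last by rewrite !inE.
by split=> [i j | i]; rewrite ?inE => /eqP-> // /eqP->.
Qed.

End HallMarriage.

Lemma rainbow_forcing_card (W V : finType) (h : rel W) (g : rel V) :
    simple_graph g ->
    (forall c : V -> nat, proper_coloring g c ->
       exists f : W -> V, rainbow_induced_copy h g c f) ->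
  rainbow_forcing h #|V|.
Proof.
move=> [gC gI] forcing_g.
exists (fun x y => g (enum_val x) (enum_val y)); split.
  by split=> [x y|x]; [apply: gC | apply: gI].
move=> c proper_c; have [|f [injf gf injcf]] := forcing_g (fun v => c (enum_rank v)).
  by move=> u v guv; apply: proper_c; rewrite !enum_rankK.
exists (fun u => enum_rank (f u)); split=> [u v /enum_rank_inj /injf //|u v|//].
by rewrite !enum_rankK.
Qed.

(* The colour type is inhabited, as [hall_marriage] needs a default colour. *)
Lemma nat_coloring_fin (V : finType) (c : V -> nat) :
  exists k (col : V -> 'I_k.+1), forall u v, (col u == col v) = (c u == c v).
Proof.
exists (\max_v c v), (fun v => inord (c v)) => u v.
by rewrite -val_eqE /= !inordK // ltnS; apply: leq_bigmax.
Qed.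

Lemma card_imset_clique (V C : finType) (g : rel V) (col : V -> C) (K : {set V}) :
    (forall u v, g u v -> col u != col v) ->
    {in K &, forall u v, u != v -> g u v} ->
  #|col @: K| = #|K|.
Proof.
move=> proper_col cliqueK; apply: card_in_imset => u v uK vK.
by apply: contra_eq => /(cliqueK u v uK vK)/proper_col.
Qed.

Definition clique_weight_bound (n : nat) (s : nat -> nat) : Prop :=
  forall J : {set 'I_n}, J != set0 ->
    (exists2 j, j \in J & #|J| <= s j) \/
    (exists j j', [/\ j \in J, j' \in J, j.+1 = j' :> nat & #|J| <= s j + s j']).

Section Blowup.
Variables (n : nat) (s : nat -> nat).

Definition blowup_vertex := {j : 'I_n & 'I_(s j)}.

Definition blowup : rel blowup_vertex :=
  fun u v => [&& u != v, tag u <= (tag v).+1 & tag v <= (tag u).+1].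

Definition block (j : 'I_n) : {set blowup_vertex} :=
  [set Tagged (fun i : 'I_n => 'I_(s i)) k | k : 'I_(s j)].

Lemma blowup_simple : simple_graph blowup.
Proof.
split=> [u v|u]; rewrite /blowup ?eqxx // eq_sym.
by congr (_ && _); rewrite andbC.
Qed.

Lemma card_blowup_vertex : #|{: blowup_vertex}| = \sum_(j < n) s j.
Proof.
rewrite card_tagged sumnE big_map big_enum /=.
by apply: eq_bigr => j _; rewrite card_ord.
Qed.

Lemma tag_block j v : v \in block j -> tag v = j.
Proof. by move=> /imsetP[k _ ->]. Qed.

Lemma card_block j : #|block j| = s j.
Proof. by rewrite card_imset ?card_ord // => k k'; apply: eq_from_Tagged. Qed.

Lemma blowup_clique (j j' : 'I_n) : j <= j'.+1 -> j' <= j.+1 ->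
  {in block j :|: block j' &, forall u v, u != v -> blowup u v}.
Proof.
move=> le_jj' le_j'j u v.
rewrite /blowup !inE => /orP[] /tag_block tag_u /orP[] /tag_block tag_v ->;
  by rewrite tag_u tag_v ?leqnSn ?le_jj' ?le_j'j.
Qed.

Lemma blowup_induced_path (w : 'I_n -> blowup_vertex) :
    (forall j, tag (w j) = j) ->
  injective w /\ forall i j, blowup (w i) (w j) = path_graph i j.
Proof.
move=> tag_w; have injw : injective w by move=> i j eqw; rewrite -[i]tag_w -[j]tag_w eqw.
split=> // i j; rewrite /blowup /path_graph !tag_w (inj_eq injw) -val_eqE /=.
by apply/idP/idP; lia.
Qed.

Lemma blowup_rainbow_transversal k (col : blowup_vertex -> 'I_k.+1) :
    clique_weight_bound n s -> (forall u v, blowup u v -> col u != col v) ->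
  exists w : 'I_n -> blowup_vertex,
    (forall j, tag (w j) = j) /\ injective (fun j => col (w j)).
Proof.
move=> weight_s proper_col; pose A j := col @: block j.
have cardA j : #|A j| = s j.
  have := card_imset_clique proper_col (blowup_clique (leqnSn j) (leqnSn j)).
  by rewrite !setUid card_block.
have cardAU (j j' : 'I_n) : j.+1 = j' :> nat -> #|A j :|: A j'| = s j + s j'.
  move=> jj'; have le_jj' : j <= j'.+1 by rewrite -jj' leqW.
  have le_j'j : j' <= j.+1 by rewrite -jj'.
  rewrite -imsetU (card_imset_clique proper_col (blowup_clique le_jj' le_j'j)).
  rewrite cardsU !card_block -[RHS]subn0; congr (_ - _).
  apply/eqP; rewrite cards_eq0 -subset0; apply/subsetP => v.
  rewrite !inE => /andP[/tag_block tag_j /tag_block tag_j'].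
  by move: jj'; rewrite -tag_j -tag_j'; lia.
have hallA : hall_condition setT A.
  move=> J _; have [-> | nzJ] := eqVneq J set0; first by rewrite cards0.
  case: (weight_s J nzJ) => [[j jJ leJ] | [j [j' [jJ j'J jj' leJ]]]];
    apply: leq_trans leJ _.
  - by rewrite -cardA; apply/subset_leq_card/bigcup_sup.
  - by rewrite -cardAU //; apply/subset_leq_card; rewrite subUset !bigcup_sup.
have [f [injf fA]] := hall_marriage ord0 hallA.
have ex_w j : exists v, (v \in block j) && (col v == f j).
  by have /imsetP[v vj ->] := fA j (in_setT j); exists v; rewrite vj eqxx.
exists (fun j => xchoose (ex_w j)); split=> [j | i j].
  by have /andP[/tag_block] := xchooseP (ex_w j).
have /andP[_ /eqP->] := xchooseP (ex_w i); have /andP[_ /eqP->] := xchooseP (ex_w j).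
by apply: injf; rewrite in_setT.
Qed.

End Blowup.

Lemma blowup_forces_rainbow_path n s (c : blowup_vertex n s -> nat) :
    clique_weight_bound n s -> proper_coloring (@blowup n s) c ->
  exists f, rainbow_induced_copy (@path_graph n) (@blowup n s) c f.
Proof.
move=> weight_s proper_c; have [k [col col_eq]] := nat_coloring_fin c.
have proper_col u v : blowup u v -> col u != col v.
  by move=> /proper_c; rewrite col_eq => /eqP.
have [w [tag_w injcw]] := blowup_rainbow_transversal weight_s proper_col.
have [injw path_w] := blowup_induced_path tag_w.
exists w; split=> // i j /eqP; rewrite -col_eq => /eqP; exact: injcw.
Qed.

Lemma rho_le_blowup n s B :
  clique_weight_bound n s -> \sum_(j < n) s j <= B -> rho_le (@path_graph n) B.
Proof.
move=> weight_s le_sB; exists #|{: blowup_vertex n s}|; first by rewrite card_blowup_vertex.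
apply: rainbow_forcing_card (@blowup_simple n s) _ => c.
exact: blowup_forces_rainbow_path.
Qed.

Lemma card_le_avoiding n (J : {set 'I_n}) m (S : seq nat) :
    (forall j, j \in J -> j <= m) -> uniq S ->
    all (fun x => (x <= m) && (x \notin [seq val j | j <- enum J])) S ->
  #|J| + size S <= m.+1.
Proof.
move=> leJm uniqS /allP SP; rewrite cardE -(size_map val) -size_cat.
rewrite -(size_iota 0 m.+1); apply: uniq_leq_size => [|x].
  rewrite cat_uniq (map_inj_uniq val_inj) enum_uniq uniqS andbT /=.
  by apply/hasPn => x /SP /andP[].
rewrite mem_cat mem_iota add0n ltnS => /orP[/mapP[j jJ ->] | /SP /andP[] //].
by apply: leJm; rewrite -mem_enum.
Qed.

Definition path_weights (j : nat) : nat := if j <= 4 then maxn 1 j else j.-1.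

Lemma clique_weight_bound_path_weights n : clique_weight_bound n path_weights.
Proof.
move=> J /set0Pn[j0 j0J].
have [m mJ m_max] : exists2 m : 'I_n, m \in J & forall j, j \in J -> j <= m.
  by case: (arg_maxnP val j0J) => m mJ ?; exists m.
pose NJ := [seq val j | j <- enum J].
have NJP (x : nat) : reflect (exists2 j, j \in J & x = j) (x \in NJ).
  by apply: (iffP mapP) => -[j]; rewrite ?mem_enum; exists j; rewrite ?mem_enum.
have card_le := card_le_avoiding m_max.
(* With m = max J: either m - 1 is in J, or J misses m - 1 and, when m > 4,
   also misses m - 2 or m - 3 unless (m - 3, m - 2) is a heavy enough edge. *)
case: (posnP m) => [m0 | m_gt0].
  by left; exists m => //; have := card_le [::]; rewrite m0 /path_weights /=; lia.
case: (boolP (m.-1 \in NJ)) => [/NJP[j jJ jm] | p1].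
  right; exists j, m; split=> //; first by rewrite -jm prednK.
  have := card_le [::]; rewrite -jm /path_weights /=.
  by do ![case: ifP => ?]; lia.
have [m_le4 | m_gt4] := leqP m 4.
  left; exists m => //; have := card_le [:: m.-1]; rewrite /= p1 /path_weights m_le4.
  lia.
case: (boolP (m - 2 \in NJ)) => [/NJP[j2 j2J j2m] | p2]; last first.
  left; exists m => //; have := card_le [:: m.-1; m - 2].
  by rewrite /= inE p1 p2 /path_weights (leqNgt m 4) m_gt4 /=; lia.
case: (boolP (m - 3 \in NJ)) => [/NJP[j3 j3J j3m] | p3]; last first.
  left; exists m => //; have := card_le [:: m.-1; m - 3].
  by rewrite /= inE p1 p3 /path_weights (leqNgt m 4) m_gt4 /=; lia.
right; exists j3, j2; split=> //; first by rewrite -j3m -j2m; lia.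
have := card_le [:: m.-1]; rewrite /= p1 -j3m -j2m /path_weights.
by do ![case: ifP => ?]; lia.
Qed.

Definition clique_weight_boundb (s : nat -> nat) (b : seq bool) : bool :=
  has (fun j => nth false b j && (count id b <= s j)) (iota 0 (size b)) ||
  has (fun j => [&& nth false b j, nth false b j.+1 & count id b <= s j + s j.+1])
    (iota 0 (size b)).

Lemma clique_weight_boundbP n s :
    (forall b, size b = n -> has id b -> clique_weight_boundb s b) ->
  clique_weight_bound n s.
Proof.
move=> weight_s J /set0Pn[j0 j0J].
pose b := [seq j \in J | j <- enum 'I_n].
have size_b : size b = n by rewrite size_map size_enum_ord.
have count_b : count id b = #|J|.
  rewrite count_map cardE /enum_mem size_filter /= count_filter.
  by apply: eq_count => j /=; rewrite andbT.
have nth_b j : j < n -> nth false b j = (nth j0 (enum 'I_n) j \in J).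
  by move=> lt_jn; rewrite (nth_map j0) // size_enum_ord.
have : has id b by apply/hasP; exists true => //; apply/mapP; exists j0; rewrite ?mem_enum.
move=> /(weight_s b size_b); rewrite /clique_weight_boundb size_b count_b.
case/orP => /hasP[j]; rewrite mem_iota add0n => /andP[_ lt_jn].
  rewrite nth_b // => /andP[jJ leJ].
  by left; exists (nth j0 (enum 'I_n) j); rewrite ?nth_enum_ord.
case/and3P=> bj bj1 leJ; have lt_j1n : j.+1 < n.
  by rewrite ltnNge; apply: contraTN bj1 => le_nj1; rewrite nth_default ?size_b.
move: bj bj1; rewrite !nth_b // => jJ j1J.
by right; exists (nth j0 (enum 'I_n) j), (nth j0 (enum 'I_n) j.+1); rewrite !nth_enum_ord.
Qed.

Definition weights7 (j : nat) : nat := nth 0 [:: 1; 2; 3; 4; 2; 2; 4] j.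

Lemma clique_weight_bound_weights7 : clique_weight_bound 7 weights7.
Proof.
apply: clique_weight_boundbP => b.
case: b => [|b0 [|b1 [|b2 [|b3 [|b4 [|b5 [|b6 [|b7 b]]]]]]]] //= _.
by case: b0; case: b1; case: b2; case: b3; case: b4; case: b5; case: b6.
Qed.

Lemma sum_path_weights n : 5 <= n ->
  (\sum_(j < n) path_weights j).*2 + n.*2 = n * n.-1 + 12.
Proof.
elim: n => // n IH; rewrite ltnS leq_eqVlt => /orP[/eqP<- | lt4n].
  by rewrite !big_ord_recr big_ord0.
have weight_n : path_weights n = n.-1 by rewrite /path_weights leqNgt lt4n.
rewrite big_ord_recr /= weight_n; move: (IH lt4n).
by move: (\sum_(j < n) _) => S; lia.
Qed.

Lemma sum_path_weights_le n : 1 <= n -> n != 7 ->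
  \sum_(j < n) path_weights j <= 1 + n * (n - 1) %/ 2 - 3 * (n %/ 7).
Proof.
move=> n_gt0 n_neq7; have [n_le4 | n_gt4] := leqP n 4.
  by case: n n_gt0 n_le4 {n_neq7} => [|[|[|[|[|]]]]] // _ _;
    rewrite !big_ord_recr big_ord0.
have := sum_path_weights n_gt4; lia.
Qed.

Theorem corollary5p2 (n : nat) : 1 <= n ->
  rho_le (@path_graph n) (1 + n * (n - 1) %/ 2 - 3 * (n %/ 7)).
Proof.
move=> n_gt0; have [-> | n_neq7] := eqVneq n 7.
  apply: rho_le_blowup clique_weight_bound_weights7 _.
  by rewrite !big_ord_recr big_ord0.
apply: rho_le_blowup (@clique_weight_bound_path_weights n) _.
exact: sum_path_weights_le.
Qed.
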